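(* Consider the md-value protocol described in the context, run on top of reliable point-to-point channels. In every well-formed execution of this protocol the following two properties hold. (i) Validity: if the event $\text{md-value-deliver}(t,c_s)_s$ occurs at some server $s\in\mathcal{S}$, then it is preceded by an event $\text{md-value-send}(t,v)_w$ at some writer $w$, with $t\in\mathcal{T}$ and $c_s=\Phi_s(v)$. (ii) Uniformity: if the event $\text{md-value-deliver}(t,c_s)_s$ occurs at some server $s\in\mathcal{S}$, and at most $f$ servers crash during the execution, then the event $\text{md-value-deliver}(t,c_{s'})_{s'}$ occurs at every non-faulty server $s'\in\mathcal{S}$, where $c_{s'}=\Phi_{s'}(v)$ (this must hold even if the writer that invoked $\text{md-value-send}(t,v)$ crashes after the invocation).
   Context: System model: an asynchronous message-passing system with a set $\mathcal{W}$ of writers, a set $\mathcal{R}$ of readers and a set $\mathcal{S}$ of $n$ servers. Process identifiers are totally ordered and the servers in this order are $s_1<s_2<\dots<s_n$. Every client–server pair and every server–server pair is joined by a reliable point-to-point channel: a message placed on a channel is eventually delivered if the destination does not crash, even if the sender crashes afterwards; no assumption is made on delivery order. Processes fail only by crashing; at most $f$ servers may crash, where $1\le f\le (n-1)/2$; any number of clients may crash. An execution is well-formed if every client invokes a new operation only after its previous one has completed. Coding: values lie in a set $V$; an $[n,k]$ MDS code over a finite field $\mathbb{F}_q$ with encoder $\Phi$ maps a value $v$ to $n$ coded elements, $\Phi_s(v)$ being the coded element associated to server $s$. Tags are elements of a totally ordered set $\mathcal{T}$. The md-value protocol: a writer $p$ invokes $\text{md-value-send}(t,v)_p$ with $t\in\mathcal{T}$,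 $v\in V$. This creates a fresh unique message identifier $mID$ (a pair of $p$ and a counter of $p$'s invocations), and $p$ sends the message $(mID,(t,v),\text{''full''})$ to the servers $s_1,\dots,s_{f+1}$, in this order; after all these messages are sent, $p$ outputs $\text{md-value-send-ack}(t)_p$. A server $s_i$ that receives a ''full'' message $(mID,(t,v),\text{''full''})$ for an identifier $mID$ it has not seen before: sends $(mID,(t,v),\text{''full''})$ to $s_{i+1},\dots,s_{f+1}$ (in order), sends the message $(mID,(t,\Phi_{s'}(v)),\text{''coded''})$ to every server $s'\notin\{s_1,\dots,s_{f+1}\}$, and then delivers its own coded element via the output event $\text{md-value-deliver}(t,\Phi_{s_i}(v))_{s_i}$. A server that receives a ''coded'' message $(mID,(t,c),\text{''coded''})$ for an identifier whose content it has not yet delivered outputs $\text{md-value-deliver}(t,c)_s$. Each server delivers at most once per message identifier. Crashed processes take no further steps. *)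

From mathcomp Require Import all_boot all_order.
Set Implicit Arguments. Unset Strict Implicit. Unset Printing Implicit Defensive.

(* "Any k coded elements determine the value": the decoding property of an
   [n,k] MDS code (coordinates restricted to any k servers are injective). *)
Definition mds_code (n : nat) (V C : Type) (k : nat) (Phi : 'I_n -> V -> C) :=
  (0 < k <= n) /\
  forall S : {set 'I_n}, #|S| = k ->
    forall v v' : V, (forall s, s \in S -> Phi s v = Phi s v') -> v = v'.

Section Protocol.
Variables (W : eqType) (T V C : Type) (n : nat).

(* processes: writers (inl) and servers (inr); server s_i is ordinal i-1 *)
Definition proc := (W + 'I_n)%type.
(* message identifiers: (writer, invocation counter of that writer) *)
Definition mid := (W * nat)%type.

Inductive msg :=
| Full  of mid & T & V
| Coded of mid & T & C.

(* pending local actions of a process (its ongoing, non-atomic handler) *)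
Inductive action :=
| ASend of proc & msg
| ADeliver of T & C
| AAck of T.

Inductive label :=
| LInvoke of W & T & V
| LAck of W & T
| LSend of proc & proc & msg
| LRecv of proc & proc & msg
| LDeliver of 'I_n & T & C
| LCrash of proc
| LSkip.

Record config := Cfg {
  crashed : proc -> bool;
  prog    : proc -> seq action;
  ctr     : W -> nat;
  handled : 'I_n -> seq mid;
  net     : seq (proc * proc * msg)    (* in-transit messages (multiset) *)
}.

Definition upd (A : eqType) (B : Type) (g : A -> B) (a : A) (b : B) :=
  fun x => if x == a then b else g x.

Definition init_config : config :=
  Cfg (fun _ => false) (fun _ => [::]) (fun _ => 0) (fun _ => [::]) [::].

Variables (f : nat) (Phi : 'I_n -> V -> C).

(* s_1 < ... < s_{f+1} are the ordinals 0..f *)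
Definition in_full (s : 'I_n) : bool := s < f.+1.

Definition writer_actions (m : mid) (t : T) (v : V) : seq action :=
  map (fun s => ASend (inr s) (Full m t v)) (filter (fun s : 'I_n => in_full s) (enum 'I_n)) ++ [:: AAck t].

Definition server_full_actions (s : 'I_n) (m : mid) (t : T) (v : V) :=
  map (fun s' => ASend (inr s') (Full m t v)) (filter (fun s' : 'I_n => (s < s') && in_full s') (enum 'I_n))
  ++ map (fun s' => ASend (inr s') (Coded m t (Phi s' v))) (filter (fun s' : 'I_n => ~~ in_full s') (enum 'I_n))
  ++ [:: ADeliver t (Phi s v)].

Definition set_prog (c : config) (p : proc) (a : seq action) : config :=
  Cfg (crashed c) (upd (prog c) p a) (ctr c) (handled c) (net c).

Definition do_invoke (c : config) (w : W) (t : T) (v : V) : config :=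
  Cfg (crashed c)
      (upd (prog c) (inl w) (prog c (inl w) ++ writer_actions (w, ctr c w) t v))
      (upd (ctr c) w (ctr c w).+1) (handled c) (net c).

Definition react (q : proc) (m : msg) (c : config) : config :=
  match q with
  | inl _ => c
  | inr s =>
    match m with
    | Full i t v =>
        if i \in handled c s then c else
        Cfg (crashed c)
            (upd (prog c) (inr s) (prog c (inr s) ++ server_full_actions s i t v))
            (ctr c) (upd (handled c) s (i :: handled c s)) (net c)
    | Coded i t x =>
        if i \in handled c s then c else
        Cfg (crashed c)
            (upd (prog c) (inr s) (prog c (inr s) ++ [:: ADeliver t x]))
            (ctr c) (upd (handled c) s (i :: handled c s)) (net c)
    end
  end.

Inductive step : config -> label -> config -> Prop :=
| st_invoke c w t v :
    ~~ crashed c (inl w) -> step c (LInvoke w t v) (do_invoke c w t v)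
| st_send c p q m rest :
    ~~ crashed c p -> prog c p = ASend q m :: rest ->
    step c (LSend p q m)
      (Cfg (crashed c) (upd (prog c) p rest) (ctr c) (handled c) ((p, q, m) :: net c))
| st_ack c w t rest :
    ~~ crashed c (inl w) -> prog c (inl w) = AAck t :: rest ->
    step c (LAck w t) (set_prog c (inl w) rest)
| st_deliver c s t x rest :
    ~~ crashed c (inr s) -> prog c (inr s) = ADeliver t x :: rest ->
    step c (LDeliver s t x) (set_prog c (inr s) rest)
| st_recv c p q m n1 n2 :
    ~~ crashed c q -> net c = n1 ++ (p, q, m) :: n2 ->
    step c (LRecv p q m)
      (react q m (Cfg (crashed c) (prog c) (ctr c) (handled c) (n1 ++ n2)))
| st_crash c p :
    ~~ crashed c p ->
    step c (LCrash p)
      (Cfg (upd (crashed c) p true) (prog c) (ctr c) (handled c) (net c))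
| st_skip c : step c LSkip c.

Definition correct (lab : nat -> label) (p : proc) : Prop :=
  forall j, lab j <> LCrash p.

Definition local_step_of (p : proc) (l : label) : Prop :=
  match l with
  | LSend p' _ _ => p' = p
  | LAck w _ => inl w = p
  | LDeliver s _ _ => inr s = p
  | _ => False
  end.

Definition execution (cfg : nat -> config) (lab : nat -> label) : Prop :=
  cfg 0 = init_config /\
  (forall i, step (cfg i) (lab i) (cfg i.+1)) /\
  (* reliable channels: a message in transit to a non-crashing process is
     eventually received (whatever happens to the sender) *)
  (forall i p q m, (exists n1 n2, net (cfg i) = n1 ++ (p, q, m) :: n2) -> correct lab q ->
     exists j, i <= j /\ lab j = LRecv p q m) /\
  (forall i p, correct lab p -> prog (cfg i) p <> [::] ->
     exists j, i <= j /\ local_step_of p (lab j)).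

Definition well_formed (lab : nat -> label) : Prop :=
  forall w i j t t' v v', i < j ->
    lab i = LInvoke w t v -> lab j = LInvoke w t' v' ->
    exists k t'', i < k < j /\ lab k = LAck w t''.

End Protocol.

Arguments LInvoke {W T V C n}.
Arguments LAck {W T V C n}.
Arguments LSend {W T V C n}.
Arguments LRecv {W T V C n}.
Arguments LDeliver {W T V C n}.
Arguments LCrash {W T V C n}.
Arguments LSkip {W T V C n}.
Arguments Full {W T V C}.
Arguments Coded {W T V C}.

From mathcomp Require Import all_boot all_order.
From Stdlib Require List Classical_Prop.
Set Implicit Arguments. Unset Strict Implicit. Unset Printing Implicit Defensive.

(* A pending action, and a message in transit, always carries the identifier of an
   earlier invocation md-value-send(t, v) together with Phi_s v for the server s it
   concerns; moreover a "full" message for that identifier goes to s_l only after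
   s_1, ..., s_(l-1) have been sent one or are scheduled to be sent one earlier, while
   coded messages and deliveries happen only once all of s_1, ..., s_(f+1) have been
   sent one.  Validity is the first half of this invariant.  Since at most f servers
   crash, some s_l with l <= f+1 is correct; it receives the full message, delivers and
   forwards the coded elements to the servers outside s_1, ..., s_(f+1), so every correct
   server handles the identifier and eventually delivers.  Invocation counters make
   identifiers unique, hence every message handled for the identifier carries the same
   (t, v). *)

Lemma cat_eq_cat_cons (A : Type) (s1 s2 pre post : seq A) a :
  s1 ++ s2 = pre ++ a :: post ->
  (exists post1, s1 = pre ++ a :: post1) \/
  (exists2 pre2, pre = s1 ++ pre2 & s2 = pre2 ++ a :: post).
Proof.
elim: s1 pre => [|x s1 IH] pre /=; first by move=> ->; right; exists pre.
case: pre => [|y pre] /= [<- E]; first by left; exists s1.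
by case: (IH _ E) => [[post1 ->]|[pre2 -> ->]]; [left; exists post1 | right; exists pre2].
Qed.

Lemma map_eq_cat_cons (A B : Type) (g : A -> B) r pre b post :
  map g r = pre ++ b :: post ->
  exists r1 x r2, [/\ r = r1 ++ x :: r2, pre = map g r1 & b = g x].
Proof.
elim: r pre => [|y r IH] [|b' pre] //= [Ey E]; first by exists [::], y, r.
have [r1 [x [r2 [-> -> ->]]]] := IH _ E.
by exists (y :: r1), x, r2; rewrite -Ey.
Qed.

Lemma ltn_ord_trans n : transitive (relpre (@nat_of_ord n) ltn).
Proof. by move=> ? ? ?; apply: ltn_trans. Qed.

Lemma filter_enum_sorted n (P : pred 'I_n) :
  sorted (relpre (@nat_of_ord n) ltn) (filter P (enum 'I_n)).
Proof.
apply: (sorted_filter (@ltn_ord_trans n) P).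
have := iota_ltn_sorted 0 n; rewrite -val_enum_ord sorted_map; exact: id.
Qed.

Lemma filter_enum_split n (P : pred 'I_n) (A : Type) (g : 'I_n -> A) pre a post :
  map g (filter P (enum 'I_n)) = pre ++ a :: post ->
  exists r1 x, [/\ pre = map g r1, a = g x, P x & forall y, P y -> y < x -> y \in r1].
Proof.
move=> Eg; have [r1 [x [r2 [Er -> ->]]]] := map_eq_cat_cons Eg; exists r1, x.
have /= := filter_enum_sorted P; rewrite Er sorted_cat_cons (path_sortedE (@ltn_ord_trans n)).
case/and3P=> _ /allP x_lt _.
have : x \in filter P (enum 'I_n) by rewrite Er mem_cat mem_head orbT.
rewrite mem_filter => /andP[Px _].
split=> // y Py yx; have : y \in filter P (enum 'I_n) by rewrite mem_filter Py mem_enum.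
rewrite Er mem_cat inE.
case/or3P=> [//| /eqP Ey | /x_lt /= xy]; first by rewrite Ey ltnn in yx.
by have := ltn_trans xy yx; rewrite ltnn.
Qed.

Lemma leq_half_pred_ltn m n : 0 < m -> m <= (n - 1)./2 -> m < n.
Proof.
move=> m_gt0; rewrite geq_half_double => le_m2; apply: leq_trans (leq_subr 1 n).
by apply: leq_trans le_m2; rewrite -addnn -[X in X < _]addn0 ltn_add2l.
Qed.

Arguments ASend {W T V C n}.
Arguments ADeliver {W T V C n}.
Arguments AAck {W T V C n}.

Lemma upd_same (A : eqType) B (g : A -> B) a b : upd g a b a = b.
Proof. by rewrite /upd eqxx. Qed.

Lemma upd_other (A : eqType) B (g : A -> B) a b x : x != a -> upd g a b x = g x.
Proof. by rewrite /upd => /negbTE ->. Qed.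

Section Steps.
Variables (W : eqType) (T V C : Type) (n f : nat) (Phi : 'I_n -> V -> C).

Local Notation act := (action W T V C n).
Local Notation config := (config W T V C n).
Local Notation step := (step f Phi).

Definition performs (p : proc W n) (a : act) (l : label W T V C n) : Prop :=
  match a, p with
  | ASend q m, _ => l = LSend p q m
  | ADeliver t x, inr s => l = LDeliver s t x
  | AAck t, inl w => l = LAck w t
  | _, _ => False
  end.

Definition mid_of (m : msg W T V C) : mid W := let: (Full i _ _ | Coded i _ _) := m in i.

Definition received_actions (s : 'I_n) (m : msg W T V C) : seq act :=
  match m with
  | Full i t v => server_full_actions f Phi s i t v
  | Coded _ t x => [:: ADeliver t x]
  end.

Lemma react_server s m (c : config) :
  react f Phi (inr s) m c =
  if mid_of m \in handled c s then c else
  Cfg (crashed c) (upd (prog c) (inr s) (prog c (inr s) ++ received_actions s m))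
      (ctr c) (upd (handled c) s (mid_of m :: handled c s)) (net c).
Proof. by case: m. Qed.

Lemma step_local c l c' p : step c l c' -> local_step_of p l ->
  exists2 h, prog c p = h :: prog c' p & performs p h l.
Proof.
case=> {c l c'} //= [c p' q m rest _ Ep | c w t rest _ Ep | c s t x rest _ Ep] Ep'; subst p.
- by rewrite upd_same Ep; exists (ASend q m).
- by rewrite /set_prog /= upd_same Ep; exists (AAck t).
- by rewrite /set_prog /= upd_same Ep; exists (ADeliver t x).
Qed.

Lemma step_prog c l c' p : step c l c' ->
  [\/ exists2 h, prog c p = h :: prog c' p & performs p h l,
      exists w t v, [/\ l = LInvoke w t v, p = inl w &
        prog c' p = prog c p ++ writer_actions C n f (w, ctr c w) t v],
      exists q s m, [/\ List.In (q, inr s, m) (net c), p = inr s &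
        prog c' p = prog c p ++ received_actions s m]
    | prog c' p = prog c p].
Proof.
case=> {c l c'} /=.
- move=> c w t v _; case: (eqVneq p (inl w)) => [->|ne].
    by apply: Or42; exists w, t, v; rewrite upd_same.
  by apply: Or44; rewrite upd_other.
- move=> c p' q m rest _ Ep; case: (eqVneq p p') => [->|ne].
    by apply: Or41; rewrite upd_same Ep; exists (ASend q m).
  by apply: Or44; rewrite upd_other.
- move=> c w t rest _ Ep; case: (eqVneq p (inl w)) => [->|ne].
    by apply: Or41; rewrite /set_prog /= upd_same Ep; exists (AAck t).
  by apply: Or44; rewrite /set_prog /= upd_other.
- move=> c s t x rest _ Ep; case: (eqVneq p (inr s)) => [->|ne].
    by apply: Or41; rewrite /set_prog /= upd_same Ep; exists (ADeliver t x).
  by apply: Or44; rewrite /set_prog /= upd_other.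
- move=> c p' [w|s] m n1 n2 _ Enet; first exact: Or44.
  rewrite react_server; case: ifP => _; first exact: Or44.
  case: (eqVneq p (inr s)) => [->|ne]; last by apply: Or44; rewrite /= upd_other.
  apply: Or43; exists p', s, m; rewrite /= upd_same; split=> //.
  by rewrite Enet; apply: List.in_or_app; right; left.
- by move=> *; apply: Or44.
- by move=> *; apply: Or44.
Qed.

Lemma step_pop_or_grow c l c' p : step c l c' ->
  (exists2 h, prog c p = h :: prog c' p & performs p h l) \/
  exists e, prog c' p = prog c p ++ e.
Proof.
case/(step_prog p) => [pop | [w [t [v [_ _ ->]]]] | [q [s [m [_ _ ->]]]] | ->];
  by [left | right; eexists | right; exists [::]; rewrite cats0].
Qed.

Lemma step_net (c c' : config) l : step c l c' ->
  [\/ exists p q m, [/\ l = LSend p q m, net c' = (p, q, m) :: net c &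
        exists rest, prog c p = ASend q m :: rest],
      exists p q m n1 n2, net c = n1 ++ (p, q, m) :: n2 /\ net c' = n1 ++ n2
    | net c' = net c].
Proof.
case=> {c l c'} /=; try by move=> *; apply: Or33.
- by move=> c p q m rest _ Ep; apply: Or31; exists p, q, m; split=> //; exists rest.
- move=> c p q m n1 n2 _ Enet; apply: Or32; exists p, q, m, n1, n2; split=> //.
  by case: q {Enet} => // s; rewrite react_server; case: ifP.
Qed.

Lemma step_handled (c c' : config) l s i : step c l c' -> i \in handled c' s ->
  i \in handled c s \/
  exists q m, [/\ List.In (q, inr s, m) (net c), mid_of m = i &
    prog c' (inr s) = prog c (inr s) ++ received_actions s m].
Proof.
case=> {c l c'} /=; try by move=> *; left.
move=> c p [w|s'] m n1 n2 _ Enet; first by left.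
rewrite react_server; case: ifP => _ /=; first by left.
case: (eqVneq s s') => [->|ne]; last by rewrite upd_other //; left.
rewrite !upd_same inE => /orP[/eqP Ei|]; last by left.
right; exists p, m; split; rewrite ?Ei //.
by rewrite Enet; apply: List.in_or_app; right; left.
Qed.

Lemma step_ctr (c c' : config) l w : step c l c' ->
  ctr c' w = ctr c w + (if l is LInvoke w' _ _ then w' == w else false).
Proof.
case=> {c l c'} /=; try by move=> *; rewrite addn0.
- by move=> c w' t v _; rewrite /upd eq_sym; case: eqP => [->|]; rewrite ?addn1 ?addn0.
- move=> c p [w'|s] m n1 n2 _ _; rewrite addn0 //.
  by rewrite react_server; case: ifP.
Qed.

Lemma step_send_net (c c' : config) p q m : step c (LSend p q m) c' ->
  net c' = (p, q, m) :: net c.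
Proof. by move=> st; inversion st. Qed.

Lemma step_recv_handled (c c' : config) p s m : step c (LRecv p (inr s) m) c' ->
  mid_of m \in handled c' s.
Proof.
move=> st; inversion st; rewrite react_server; case: ifP => //= _.
by rewrite upd_same mem_head.
Qed.

End Steps.

Section Execution.
Variables (W : eqType) (T V C : Type) (n f : nat) (Phi : 'I_n -> V -> C).
Variables (cfg : nat -> config W T V C n) (lab : nat -> label W T V C n).
Hypothesis exec : execution f Phi cfg lab.

Local Notation act := (action W T V C n).

Lemma exec_step i : step f Phi (cfg i) (lab i) (cfg i.+1).
Proof. by case: exec => _ []. Qed.

Lemma head_performed p i h q : correct lab p -> prog (cfg i) p = h :: q ->
  exists j e, [/\ i <= j, performs p h (lab j) & prog (cfg j.+1) p = q ++ e].
Proof.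
move=> p_ok Eq; have [_ [_ [_ fair]]] := exec.
have [j [ij loc]] : exists j, i <= j /\ local_step_of p (lab j) by apply: fair; rewrite // Eq.
move: (j - i) (subnKC ij) loc => d <- {j ij}.
elim: d i q Eq => [|d IH] i q Eq loc.
  rewrite addn0 in loc; have [h' Eh' hp] := step_local (exec_step i) loc.
  move: Eh'; rewrite Eq => -[-> ->].
  by exists i, [::]; rewrite cats0.
case: (step_pop_or_grow p (exec_step i)) => [[h' Eh' hp] | [e Ee]].
  by exists i, [::]; move: Eh'; rewrite Eq cats0 => -[-> ->].
have [j' [e' [ij' hp Ej']]] : exists j' e', [/\ i.+1 <= j', performs p h (lab j') &
    prog (cfg j'.+1) p = (q ++ e) ++ e'] by apply: IH; rewrite ?Ee ?Eq // addSnnS.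
by exists j', (e ++ e'); rewrite catA; split=> //; apply: ltnW.
Qed.

Lemma eventually_performed p i pre a post : correct lab p ->
  prog (cfg i) p = pre ++ a :: post -> exists2 j, i <= j & performs p a (lab j).
Proof.
move=> p_ok; elim: pre i post => [|h pre IH] i post /= Eq.
  by have [j [e [ij hp _]]] := head_performed p_ok Eq; exists j.
have [j [e [ij _ Ej]]] := head_performed p_ok Eq.
have [j' jj' hp] : exists2 j', j.+1 <= j' & performs p a (lab j') by apply: IH; rewrite Ej -catA.
by exists j' => //; apply: leq_trans jj'; apply: leqW.
Qed.

Definition invoked i (m : mid W) (t : T) (v : V) :=
  exists2 j, j < i & lab j = LInvoke m.1 t v /\ ctr (cfg j) m.1 = m.2.

Definition sent_before i p q (m : msg W T V C) := exists2 j, j < i & lab j = LSend p q m.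

Definition full_sent i (m : mid W) (l : 'I_n) :=
  exists p t v, sent_before i p (inr l) (Full m t v).

Definition full_send_to (m : mid W) (l : 'I_n) (a : act) : bool :=
  if a is ASend (inr l') (Full m' _ _) then (l' == l) && (m' == m) else false.

Definition scheduled i (pre : seq act) m l := full_sent i m l \/ has (full_send_to m l) pre.

Definition covered i pre m (b : nat) := forall l : 'I_n, l < b -> scheduled i pre m l.

(* [pre] lists the actions queued before [a]; the index [i] refers to the events
   before step [i]. *)
Definition action_ok i (p : proc W n) (pre : seq act) (a : act) : Prop :=
  match a, p with
  | ASend (inr l) (Full m t v), _ => [/\ in_full f l, invoked i m t v & covered i pre m l]
  | ASend (inr l) (Coded m t x), _ =>
      [/\ ~~ in_full f l, covered i pre m f.+1 & exists2 v, invoked i m t v & x = Phi l v]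
  | ADeliver t x, inr s =>
      exists m, covered i pre m f.+1 /\ exists2 v, invoked i m t v & x = Phi s v
  | AAck _, inl _ => True
  | _, _ => False
  end.

Definition queue_ok i p q := forall pre a post, q = pre ++ a :: post -> action_ok i p pre a.

Definition config_ok i (c : config W T V C n) :=
  (forall p, queue_ok i p (prog c p)) /\
  forall p q m, List.In (p, q, m) (net c) -> action_ok i p [::] (ASend q m) /\ sent_before i p q m.

Lemma invoked_mono i i' m t v : i <= i' -> invoked i m t v -> invoked i' m t v.
Proof. by move=> ii' [j ji E]; exists j => //; apply: leq_trans ii'. Qed.

Lemma sent_before_mono i i' p q m : i <= i' -> sent_before i p q m -> sent_before i' p q m.
Proof. by move=> ii' [j ji E]; exists j => //; apply: leq_trans ii'. Qed.

Lemma action_ok_weaken i i' p pre pre' a : i <= i' ->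
  (forall m l, scheduled i pre m l -> scheduled i' pre' m l) ->
  action_ok i p pre a -> action_ok i' p pre' a.
Proof.
move=> ii' sch; have cov m b : covered i pre m b -> covered i' pre' m b.
  by move=> cv l lb; apply: sch; apply: cv.
case: a => [[w|l] [m t v|m t x]|t x|t] //=.
- by case=> fl inv cv; split=> //; [apply: invoked_mono inv | apply: cov].
- by case=> fl cv [v inv ->]; split=> //; [apply: cov | exists v => //; apply: invoked_mono inv].
- case: p => // s [m [cv [v inv ->]]]; exists m; split; first exact: cov.
  by exists v => //; apply: invoked_mono inv.
Qed.

Lemma scheduled_mono i i' pre m l : i <= i' -> scheduled i pre m l -> scheduled i' pre m l.
Proof.
by move=> ii' [[q [t [v sent]]] | ?]; [left; exists q, t, v; apply: sent_before_mono sent | right].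
Qed.

Lemma action_ok_mono i i' p pre a : i <= i' -> action_ok i p pre a -> action_ok i' p pre a.
Proof. by move=> ii'; apply: (action_ok_weaken ii') => m l; apply: scheduled_mono. Qed.

Lemma scheduled_pop i p h pre m l : performs p h (lab i) ->
  scheduled i (h :: pre) m l -> scheduled i.+1 pre m l.
Proof.
move=> hp [sent | /= /orP[h_to_l | in_pre]].
- by apply: scheduled_mono (leqnSn i) _; left.
- case: h hp h_to_l => [[w|l'] [m' t v|m' t x] | t x | t] //= El /andP[/eqP El' /eqP Em].
  by left; exists p, t, v, i; rewrite // El El' Em.
- by right.
Qed.

Lemma queue_ok_mono i i' p q : i <= i' -> queue_ok i p q -> queue_ok i' p q.
Proof. by move=> ii' ok pre a post /ok; apply: action_ok_mono. Qed.

Lemma queue_ok_pop i p h q : performs p h (lab i) -> queue_ok i p (h :: q) -> queue_ok i.+1 p q.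
Proof.
move=> hp ok pre a post Eq.
apply: (action_ok_weaken (leqnSn i) (fun m l => scheduled_pop hp)).
by apply: (ok _ a post); rewrite Eq.
Qed.

Lemma queue_ok_cat i p q1 q2 : queue_ok i p q1 ->
  (forall pre a post, q2 = pre ++ a :: post -> action_ok i p (q1 ++ pre) a) ->
  queue_ok i p (q1 ++ q2).
Proof.
move=> ok1 ok2 pre a post Eq.
by case: (cat_eq_cat_cons Eq) => [[post1 /ok1] | [pre2 -> /ok2]].
Qed.

Lemma has_full_sends m t v r l :
  has (full_send_to m l) (map (fun s => ASend (inr s) (Full m t v) : act) r) = (l \in r).
Proof. by rewrite has_map -has_pred1; apply: eq_has => s /=; rewrite eqxx andbT. Qed.

Lemma writer_actions_ok i w t v q0 pre a post : lab i = LInvoke w t v ->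
  writer_actions C n f (w, ctr (cfg i) w) t v = pre ++ a :: post ->
  action_ok i.+1 (inl w) (q0 ++ pre) a.
Proof.
move=> Ei Ew; case: (cat_eq_cat_cons Ew) => [[post1 Eq] | [pre2 _]]; last first.
  by case: pre2 => [|? []] //= [<-].
have [r1 [x [-> -> fx below]]] := filter_enum_split Eq; split=> //; first by exists i.
move=> l lx; right; rewrite has_cat has_full_sends below ?orbT //.
exact: ltn_trans lx fx.
Qed.

Lemma received_actions_ok i p s m q0 pre a post :
  action_ok i p [::] (ASend (inr s) m) -> sent_before i p (inr s) m ->
  received_actions f Phi s m = pre ++ a :: post -> action_ok i (inr s) (q0 ++ pre) a.
Proof.
case: m => [mi t v | mi t x] /=; last first.
  case=> _ cv [v inv ->] _; case: pre => [|? []] //= [<-] _; exists mi; split; last by exists v.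
  by move=> l /cv [sent | //]; left.
case=> fs inv cv sent.
have sent_upto (l : 'I_n) : l <= s -> full_sent i mi l.
  rewrite leq_eqVlt => /orP[/eqP/val_inj -> | /cv [//|//]]; by exists p, t, v.
pose g := fun s' => ASend (inr s') (Full mi t v) : act.
have cov_above q r q' (b : nat) : b <= f.+1 -> (forall l : 'I_n, s < l -> l < b -> l \in r) ->
    covered i (q ++ map g r ++ q') mi b.
  move=> bf above l lb; case: (leqP l s) => [/sent_upto | sl]; first by left.
  by right; rewrite !has_cat has_full_sends above ?orbT.
rewrite /server_full_actions -/g => Es.
case: (cat_eq_cat_cons Es) => [[post1 Eq] | [pre2 -> Er]].
  have [r1 [x [-> -> /andP[sx fx] below]]] := filter_enum_split Eq.
  split=> //; rewrite -[map g r1]cats0; apply: cov_above => [|l sl lx]; first exact: ltnW.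
  by apply: below; rewrite // sl; apply: ltn_trans lx fx.
have cov_all (q' : seq act) :
    covered i (q0 ++ map g (filter (fun s' : 'I_n => (s < s') && in_full f s') (enum 'I_n)) ++ q')
      mi f.+1.
  by apply: cov_above => // l sl lf; rewrite mem_filter sl mem_enum andbT.
case: (cat_eq_cat_cons Er) => [[post1 Eq] | [pre3 -> Ed]].
  have [r1 [x [-> -> nfx _]]] := filter_enum_split Eq.
  by split=> //; exists v.
case: pre3 Ed => [|? []] //= [<-] _; exists mi; split; last by exists v.
exact: cov_all.
Qed.

Lemma config_ok_step i : config_ok i (cfg i) -> config_ok i.+1 (cfg i.+1).
Proof.
move=> [qok nok]; have st := exec_step i.
have old p q m : List.In (p, q, m) (net (cfg i)) ->
    action_ok i.+1 p [::] (ASend q m) /\ sent_before i.+1 p q m.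
  by case/nok=> aok sent; split; [apply: action_ok_mono aok | apply: sent_before_mono sent].
split=> [p | p q m].
  case: (step_prog p st) => [[h Eh hp] | [w [t [v [Ei -> ->]]]] | [q [s [m [inn -> ->]]]] | ->].
  - by apply: queue_ok_pop hp _; rewrite -Eh.
  - apply: queue_ok_cat (queue_ok_mono (leqnSn i) (qok _)) _ => pre a post.
    exact: writer_actions_ok.
  - apply: queue_ok_cat (queue_ok_mono (leqnSn i) (qok _)) _ => pre a post Er.
    have [aok sent] := nok _ _ _ inn.
    exact: action_ok_mono (leqnSn i) (received_actions_ok _ aok sent Er).
  - exact: queue_ok_mono (leqnSn i) (qok p).
case: (step_net st) => [[p' [q' [m' [Ei -> [rest Ep]]]]] | [p' [q' [m' [n1 [n2 [En ->]]]]]] | ->].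
- case=> [[<- <- <-] | /old //]; split; last by exists i.
  by apply: action_ok_mono (leqnSn i) _; apply: (qok p' [::] _ rest Ep).
- move=> inn; apply: old; rewrite En; apply: List.in_or_app.
  by case: (List.in_app_or _ _ _ inn); [left | right; right].
- exact: old.
Qed.

Lemma config_ok_at i : config_ok i (cfg i).
Proof.
elim: i => [|i /config_ok_step //]; case: exec => -> _.
by split=> // p [|? ?] ? ?.
Qed.

Lemma delivered_ok i s t x : lab i = LDeliver s t x ->
  exists m, covered i [::] m f.+1 /\ exists2 v, invoked i m t v & x = Phi s v.
Proof.
move=> Ei; have := step_local (p := inr s) (exec_step i); rewrite Ei => /(_ erefl) [h Eh].
case: h Eh => [q m | t' x' | t'] //= Eh [-> ->].
by have [qok _] := config_ok_at i; apply: (qok (inr s) [::] _ _ Eh).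
Qed.

Lemma ctr_mono i j w : i <= j -> ctr (cfg i) w <= ctr (cfg j) w.
Proof.
move/subnKC <-; elim: (j - i) => [|d IH]; first by rewrite addn0.
by rewrite addnS (step_ctr w (exec_step _)); apply: leq_trans IH (leq_addr _ _).
Qed.

Lemma invoked_unique i i' m t v t' v' : invoked i m t v -> invoked i' m t' v' -> t = t' /\ v = v'.
Proof.
have later j j' t1 v1 : lab j = LInvoke m.1 t1 v1 -> ctr (cfg j) m.1 = m.2 -> j < j' ->
    ctr (cfg j') m.1 != m.2.
  move=> Ej Ec jj'; have := ctr_mono m.1 jj'.
  by rewrite (step_ctr m.1 (exec_step j)) Ej eqxx Ec addn1 => /gtn_eqF ->.
move=> [j _ [Ej Ec]] [j' _ [Ej' Ec']]; case: (ltngtP j j') => [jj' | j'j | Ejj'].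
- by have := later _ _ _ _ Ej Ec jj'; rewrite Ec' eqxx.
- by have := later _ _ _ _ Ej' Ec' j'j; rewrite Ec eqxx.
- by move: Ej; rewrite Ejj' Ej' => -[-> ->].
Qed.

Lemma sent_received j p s m : lab j = LSend p (inr s) m -> correct lab (inr s) ->
  exists j', mid_of m \in handled (cfg j') s.
Proof.
move=> Ej s_ok; have := exec_step j; rewrite Ej => /step_send_net En.
have [_ [_ [reliable _]]] := exec.
have [j' [_ Ej']] : exists j', j.+1 <= j' /\ lab j' = LRecv p (inr s) m.
  by apply: reliable s_ok; exists [::], (net (cfg j)); rewrite En.
by exists j'.+1; have := exec_step j'; rewrite Ej' => /step_recv_handled.
Qed.

Lemma first_handled i s mi : mi \in handled (cfg i) s ->
  exists j q m, [/\ List.In (q, inr s, m) (net (cfg j)), mid_of m = mi &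
    prog (cfg j.+1) (inr s) = prog (cfg j) (inr s) ++ received_actions f Phi s m].
Proof.
elim: i => [|i IH]; first by case: exec => ->.
by case/(step_handled (exec_step i)) => [/IH // | [q [m hm]]]; exists i, q, m.
Qed.

Lemma handled_received i0 i s mi t v : invoked i0 mi t v -> mi \in handled (cfg i) s ->
  exists j, prog (cfg j.+1) (inr s) = prog (cfg j) (inr s) ++
    (if in_full f s then server_full_actions f Phi s mi t v else [:: ADeliver t (Phi s v)]).
Proof.
move=> inv /first_handled [j [q [m [inn Em Ej]]]]; exists j; rewrite Ej; congr (_ ++ _).
have [nok _] := (config_ok_at j).2 _ _ _ inn; subst mi.
case: m {inn Ej} nok inv => [mi t' v' | mi t' x] /=.
- by case=> -> inv' _ inv; have [<- <-] := invoked_unique inv' inv.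
- by case=> /negbTE -> _ [v' inv' ->] inv; have [<- <-] := invoked_unique inv' inv.
Qed.

Lemma handled_delivers i0 i s mi t v : correct lab (inr s) -> invoked i0 mi t v ->
  mi \in handled (cfg i) s -> exists j, lab j = LDeliver s t (Phi s v).
Proof.
move=> s_ok inv /(handled_received inv) [j Ej].
have [pre Epre] : exists pre, (if in_full f s then server_full_actions f Phi s mi t v
    else [:: ADeliver t (Phi s v)]) = pre ++ [:: ADeliver t (Phi s v)].
  by case: ifP => _; [rewrite /server_full_actions catA; eexists | exists [::]].
rewrite Epre catA in Ej; have [j' _] := eventually_performed s_ok Ej.
by exists j'.
Qed.

Lemma full_server_forwards i0 i l s mi t v : correct lab (inr l) -> invoked i0 mi t v ->
  mi \in handled (cfg i) l -> in_full f l -> ~~ in_full f s ->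
  exists j, lab j = LSend (inr l) (inr s) (Coded mi t (Phi s v)).
Proof.
move=> l_ok inv /(handled_received inv) [j Ej] fl nfs; rewrite fl /server_full_actions in Ej.
have : s \in filter (fun s' : 'I_n => ~~ in_full f s') (enum 'I_n) by rewrite mem_filter nfs mem_enum.
move=> mem; move: Ej; case/splitPr: mem => r1 r2; rewrite map_cat -!catA /= !catA => Ej.
by have [j' _ hp] := eventually_performed l_ok Ej; exists j'.
Qed.

Lemma uniform_delivery i mi t v : invoked i mi t v -> covered i [::] mi f.+1 ->
  (exists2 l, in_full f l & correct lab (inr l)) ->
  forall s, correct lab (inr s) -> exists j, lab j = LDeliver s t (Phi s v).
Proof.
move=> inv cv [l fl l_ok] s s_ok.
have received l' : in_full f l' -> correct lab (inr l') -> exists j, mi \in handled (cfg j) l'.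
  by move=> fl' ok'; case: (cv l' fl') => [[p [t' [v' [j _ Ej]]]] | //]; apply: sent_received Ej ok'.
case: (boolP (in_full f s)) => [fs | nfs].
  by have [j hj] := received s fs s_ok; apply: handled_delivers s_ok inv hj.
have [j hj] := received l fl l_ok.
have [j' Ej'] := full_server_forwards l_ok inv hj fl nfs.
have [j'' hj''] := sent_received Ej' s_ok.
exact: handled_delivers s_ok inv hj''.
Qed.

End Execution.

Lemma exists_correct_full_server (W : eqType) T V C n f (lab : nat -> label W T V C n) : f < n ->
  (forall S : {set 'I_n}, (forall s, s \in S -> ~ correct lab (inr s)) -> #|S| <= f) ->
  exists2 l, in_full f l & correct lab (inr l).
Proof.
move=> fn few_faulty; apply: Classical_Prop.NNPP => none.
have : #|[set l : 'I_n | in_full f l]| <= f.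
  by apply: few_faulty => l; rewrite inE => fl l_ok; apply: none; exists l.
have sub : widen_ord fn @: [set: 'I_f.+1] \subset [set l : 'I_n | in_full f l].
  by apply/subsetP => _ /imsetP[x _ ->]; rewrite inE /in_full /= ltn_ord.
have widen_inj : injective (widen_ord fn) by move=> x y /(congr1 val) E; apply: val_inj.
have := subset_leq_card sub; rewrite (card_imset _ widen_inj) cardsT card_ord => ltf /(leq_trans ltf).
by rewrite ltnn.
Qed.

Theorem theorem1 (W : eqType) (d : Order.disp_t) (T : orderType d)
  (V C : Type) (n f k : nat) (Phi : 'I_n -> V -> C)
  (Hf1 : 1 <= f) (Hfn : f <= (n - 1)./2) (Hmds : mds_code k Phi)
  (cfg : nat -> config W T V C n) (lab : nat -> label W T V C n)
  (Hexec : execution f Phi cfg lab) (Hwf : well_formed lab) :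
  (* (i) validity *)
  (forall i s t c, lab i = LDeliver s t c ->
     exists j w v, j < i /\ lab j = LInvoke w t v /\ c = Phi s v) /\
  (* (ii) uniformity *)
  ((forall S : {set 'I_n}, (forall s, s \in S -> ~ correct lab (inr s)) -> #|S| <= f) ->
   forall i s t c, lab i = LDeliver s t c ->
     exists j w v, j < i /\ lab j = LInvoke w t v /\ c = Phi s v /\
       forall s', correct lab (inr s') ->
         exists j', lab j' = LDeliver s' t (Phi s' v)).
Proof.
have fn := leq_half_pred_ltn Hf1 Hfn.
split=> [i s t c Ei | few_faulty i s t c Ei];
  have [m [cv [v inv ->]]] := delivered_ok Hexec Ei; have [j ji [Ej _]] := inv;
  exists j, m.1, v; do 3!split=> //.
move=> s' s'_ok.
have [j' Ej'] := uniform_delivery Hexec inv cv (exists_correct_full_server fn few_faulty) s'_ok.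
by exists j'.
Qed.
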